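(* Let $\mathcal{Z}^\omega$ be the set of germs at $o=(0,0)$ of maps $F(x,y)=(f(x,y),x,y)$ into $\mathbf{R}^3_1$, with $f$ a real analytic function germ at $o$, $f(0,0)=0$, $f_x(0,0)=0$, $f_y(0,0)=1$, such that $A_F\equiv 0$, and let $\Lambda^\omega$ be the set of such germs (same normalizations) with $B_F\equiv 0$. For $F$ let $\gamma_F(x):=(f(x,0),f_y(x,0))$. Then $$\Lambda^\omega=\Big\{F\in\mathcal{Z}^\omega\ ;\ \gamma_F=\big(\psi,\sqrt{1-\dot\psi^2}\big)\ \text{for some }\psi\in C^\omega_o(\mathbf{R},0_2)\Big\},$$ where $\dot\psi=d\psi/dx$ and $C^\omega_o(\mathbf{R},0_2)$ is the set of germs at $0$ of real analytic functions $\psi$ with $\psi(0)=\psi'(0)=0$.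
   Context: $\mathbf{R}^3_1$ is Lorentz–Minkowski 3-space with coordinates $(t,x,y)$ and inner product $-dt^2+dx^2+dy^2$. For $F(x,y)=(f(x,y),x,y)$, $B_F:=1-f_x^2-f_y^2$ and $A_F:=(1-f_x^2)f_{yy}+2f_xf_yf_{xy}+(1-f_y^2)f_{xx}$. *)

From Stdlib Require Import Reals.
From Coquelicot Require Import Coquelicot.
Open Scope R_scope.

Definition analytic1_at0 (psi : R -> R) : Prop :=
  exists (r : R) (a : nat -> R), 0 < r /\
    forall x, Rabs x < r -> ex_pseries a x /\ psi x = PSeries a x.

Definition analytic2_at0 (f : R -> R -> R) : Prop :=
  exists (r : R) (a : nat -> nat -> R), 0 < r /\
    forall x y, Rabs x < r -> Rabs y < r ->
      (forall n, ex_series (fun m => Rabs (a n m) * Rabs x ^ n * Rabs y ^ m)) /\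
      ex_series (fun n => Series (fun m => Rabs (a n m) * Rabs x ^ n * Rabs y ^ m)) /\
      f x y = Series (fun n => Series (fun m => a n m * x ^ n * y ^ m)).

Definition fx (f : R -> R -> R) (x y : R) : R := Derive (fun t => f t y) x.
Definition fy (f : R -> R -> R) (x y : R) : R := Derive (fun s => f x s) y.
Definition fxx (f : R -> R -> R) (x y : R) : R := Derive (fun t => fx f t y) x.
Definition fyy (f : R -> R -> R) (x y : R) : R := Derive (fun s => fy f x s) y.
Definition fxy (f : R -> R -> R) (x y : R) : R := Derive (fun s => fx f x s) y.

Definition B_F (f : R -> R -> R) (x y : R) : R :=
  1 - (fx f x y) ^ 2 - (fy f x y) ^ 2.

Definition A_F (f : R -> R -> R) (x y : R) : R :=
  (1 - (fx f x y) ^ 2) * fyy f x y + 2 * fx f x y * fy f x y * fxy f x y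
  + (1 - (fy f x y) ^ 2) * fxx f x y.

Definition germ2_zero (g : R -> R -> R) : Prop :=
  exists eps, 0 < eps /\ forall x y, Rabs x < eps -> Rabs y < eps -> g x y = 0.

From Stdlib Require Import Reals Lra Lia ClassicalEpsilon.
From Coquelicot Require Import Coquelicot.
Open Scope R_scope.

(* Near o, [f] is the sum of an absolutely convergent double power series, hence C^2 with
   symmetric mixed partials.  Write P = f_x, Q = f_y, B = B_F and D = P_x + Q_y; then
   A_F = B D - (P B_x + Q B_y) / 2.
   If B vanishes near o, so do B_x and B_y, hence A_F; and Q = sqrt (1 - P^2) on the x-axis
   because Q(o) = 1.  Conversely, if A_F vanishes, B solves the linear transport equation
   P B_x + Q B_y = 2 D B along the field (P, Q), which is transversal to the x-axis near o
   (|P| < Q).  The condition on gamma_F makes B vanish on the x-axis, and a maximum principle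
   for the energy exp(-K y) B^2 on the triangles of dependence forces B = 0 near o.
   The trace psi = f(., 0) is analytic, with the coefficients a_{n,0} of f. *)

(** * Absolutely convergent double series *)

Lemma Series_0 : Series (fun _ => 0) = 0.
Proof.
  rewrite <- (Series_ext (fun _ => 0 * 0)) by (intros; ring).
  rewrite Series_scal_l; ring.
Qed.

Lemma ex_series_Rabs_le (a b : nat -> R) :
  (forall n, Rabs (a n) <= b n) -> ex_series b -> ex_series a.
Proof. exact (@ex_series_le R_AbsRing R_CompleteNormedModule a b). Qed.

Section NonnegSeries.

Variable a : nat -> R.
Hypothesis a_ge0 : forall n, 0 <= a n.
Hypothesis a_ex : ex_series a.

Lemma Series_ge0 : 0 <= Series a.
Proof. rewrite <- Series_0; apply Series_le; auto; intros; split; [lra | apply a_ge0]. Qed.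

Lemma sum_f_R0_le_Series N : sum_f_R0 a N <= Series a.
Proof.
  rewrite (Series_incr_n a (S N)) by (auto; lia); simpl pred.
  assert (0 <= Series (fun k => a (S N + k)%nat)); [|lra].
  rewrite <- Series_0; apply Series_le; [intros; split; [lra | apply a_ge0]|].
  exact (proj1 (ex_series_incr_n a (S N)) a_ex).
Qed.

Lemma term_le_Series m : a m <= Series a.
Proof.
  apply Rle_trans with (sum_f_R0 a m); [|apply sum_f_R0_le_Series].
  destruct m as [|m]; simpl; [lra|].
  pose proof (cond_pos_sum a m a_ge0); lra.
Qed.

End NonnegSeries.

Lemma sum_f_R0_Series_eventually (a : nat -> R) eps : ex_series a -> 0 < eps ->
  exists N, forall M, (N <= M)%nat -> Rabs (Series a - sum_f_R0 a M) < eps.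
Proof.
  intros Ha Heps.
  destruct (proj1 (is_series_Reals a (Series a)) (Series_correct a Ha) eps Heps) as [N HN].
  exists N; intros M HM; rewrite Rabs_minus_sym; apply HN; lia.
Qed.

Lemma Rabs_Series_tail_le (b : nat -> R) M :
  ex_series (fun n => Rabs (b n)) ->
  Rabs (Series b - sum_f_R0 b M) <=
  Series (fun n => Rabs (b n)) - sum_f_R0 (fun n => Rabs (b n)) M.
Proof.
  intros H.
  rewrite (Series_incr_n b (S M)) by (auto using ex_series_Rabs; lia).
  rewrite (Series_incr_n (fun n => Rabs (b n)) (S M)) by (auto; lia); simpl pred.
  replace (_ + _ - sum_f_R0 b M) with (Series (fun k => b (S M + k)%nat)) by ring.
  replace (_ + _ - _) with (Series (fun k => Rabs (b (S M + k)%nat))) by ring.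
  apply Series_Rabs, (ex_series_incr_n (fun n => Rabs (b n)) (S M)), H.
Qed.

Section DoubleSeries.

Variable b : nat -> nat -> R.
Hypothesis rows_abs : forall n, ex_series (fun m => Rabs (b n m)).
Hypothesis rows_abs_sum : ex_series (fun n => Series (fun m => Rabs (b n m))).

Let s n := Series (fun m => Rabs (b n m)).
Let tail M n := s n - sum_f_R0 (fun m => Rabs (b n m)) M.

Lemma ex_series_col_abs m : ex_series (fun n => Rabs (b n m)).
Proof.
  apply (ex_series_Rabs_le _ s); auto; intros n; rewrite Rabs_Rabsolu.
  apply (term_le_Series (fun m => Rabs (b n m))); auto using Rabs_pos.
Qed.

Let ex_series_row_partial M : ex_series (fun n => sum_f_R0 (b n) M).
Proof.
  apply (ex_series_Rabs_le _ s); auto; intros n.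
  eapply Rle_trans; [apply sum_f_R0_triangle|].
  apply (sum_f_R0_le_Series (fun m => Rabs (b n m))); auto using Rabs_pos.
Qed.

Let ex_series_row_sum : ex_series (fun n => Series (b n)).
Proof. apply (ex_series_Rabs_le _ s); auto; intros n; apply Series_Rabs; auto. Qed.

Let sum_Series_comm M :
  sum_f_R0 (fun m => Series (fun n => b n m)) M = Series (fun n => sum_f_R0 (b n) M).
Proof.
  induction M as [|M IH]; simpl; [reflexivity|].
  rewrite IH, <- Series_plus; auto using ex_series_Rabs, ex_series_col_abs.
Qed.

Let tail_bounds M n : 0 <= tail M n <= s n.
Proof.
  unfold tail, s; split.
  - pose proof (sum_f_R0_le_Series (fun m => Rabs (b n m)) (fun _ => Rabs_pos _) (rows_abs n) M); lra.
  - pose proof (cond_pos_sum (fun m => Rabs (b n m)) M (fun _ => Rabs_pos _)); lra.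
Qed.

Let ex_series_tail M : ex_series (tail M).
Proof.
  apply (ex_series_Rabs_le _ s); auto; intros n.
  destruct (tail_bounds M n); rewrite Rabs_right; lra.
Qed.

Let tail_partial_small N eps : 0 < eps ->
  exists M0, forall M, (M0 <= M)%nat -> sum_f_R0 (tail M) N < eps.
Proof.
  revert eps; induction N as [|N IH]; intros eps Heps.
  - destruct (sum_f_R0_Series_eventually _ eps (rows_abs 0) Heps) as [M0 HM0].
    exists M0; intros M HM; simpl.
    specialize (HM0 M HM); destruct (tail_bounds M 0).
    rewrite Rabs_right in HM0; unfold tail, s in *; lra.
  - destruct (IH (eps / 2)) as [M1 HM1]; [lra|].
    destruct (sum_f_R0_Series_eventually _ (eps / 2) (rows_abs (S N))) as [M2 HM2]; [lra|].
    exists (max M1 M2); intros M HM; simpl.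
    specialize (HM1 M ltac:(lia)); specialize (HM2 M ltac:(lia)); destruct (tail_bounds M (S N)).
    rewrite Rabs_right in HM2; unfold tail, s in *; lra.
Qed.

Lemma is_series_swap :
  is_series (fun m => Series (fun n => b n m)) (Series (fun n => Series (b n))).
Proof.
  (* The error after [M] columns is at most [sum_n tail M n]: the first [N] rows are
     eventually small, and the remaining rows contribute at most [sum_(n > N) s n]. *)
  apply is_series_Reals; intros eps Heps.
  destruct (sum_f_R0_Series_eventually s (eps / 2) rows_abs_sum) as [N HN]; [lra|].
  destruct (tail_partial_small N (eps / 2)) as [M0 HM0]; [lra|].
  exists M0; intros M HM; unfold R_dist.
  rewrite sum_Series_comm, <- Series_minus by auto.
  assert (Htail : forall n, Rabs (sum_f_R0 (b n) M - Series (b n)) <= tail M n)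
    by (intros n; rewrite Rabs_minus_sym; apply Rabs_Series_tail_le; auto).
  eapply Rle_lt_trans; [apply Series_Rabs|].
  { apply (ex_series_Rabs_le _ (tail M)); auto; intros n; rewrite Rabs_Rabsolu; auto. }
  apply Rle_lt_trans with (Series (tail M)).
  { apply Series_le; auto; intros n; split; [apply Rabs_pos | auto]. }
  rewrite (Series_incr_n (tail M) (S N)) by (auto; lia); simpl pred.
  assert (Series (fun k => tail M (S N + k)%nat) <= Series (fun k => s (S N + k)%nat)).
  { apply Series_le; [intros; apply tail_bounds|].
    exact (proj1 (ex_series_incr_n s (S N)) rows_abs_sum). }
  rewrite (Series_incr_n s (S N)) in HN by (auto; lia); simpl pred in HN.
  specialize (HN N (le_n _)); specialize (HM0 M HM).
  replace (_ + _ - _) with (Series (fun k => s (S N + k)%nat)) in HN by ring.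
  pose proof (Rle_abs (Series (fun k => s (S N + k)%nat))); lra.
Qed.

End DoubleSeries.

Lemma Series_swap (b : nat -> nat -> R) :
  (forall n, ex_series (fun m => Rabs (b n m))) ->
  ex_series (fun n => Series (fun m => Rabs (b n m))) ->
  Series (fun m => Series (fun n => b n m)) = Series (fun n => Series (b n)).
Proof. intros; apply is_series_unique, is_series_swap; auto. Qed.

Lemma ex_series_swap_abs (b : nat -> nat -> R) :
  (forall n, ex_series (fun m => Rabs (b n m))) ->
  ex_series (fun n => Series (fun m => Rabs (b n m))) ->
  ex_series (fun m => Series (fun n => Rabs (b n m))).
Proof.
  intros H1 H2; eexists; apply (is_series_swap (fun n m => Rabs (b n m)));
    [intros n; eapply ex_series_ext; [|apply (H1 n)]
    |eapply ex_series_ext; [|apply H2]]; intros; simpl;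
    [|apply Series_ext; intros]; rewrite Rabs_Rabsolu; auto.
Qed.

(** * Double power series *)

Lemma continuity_pt_of_is_derive (g : R -> R) x l : is_derive g x l -> continuity_pt g x.
Proof.
  intros H; apply continuity_pt_filterlim.
  apply (@ex_derive_continuous R_AbsRing R_NormedModule); exists l; exact H.
Qed.

Lemma Rabs_between_le x u c : Rmin x u <= c <= Rmax x u -> Rabs (c - x) <= Rabs (u - x).
Proof. unfold Rmin, Rmax; destruct (Rle_dec x u); intros; unfold Rabs; repeat destruct Rcase_abs; lra. Qed.

Lemma continuity_2d_pt_of_bounded_derive_x (g dg : R -> R -> R) x y d M : 0 < d ->
  (forall u v, Rabs (u - x) < d -> Rabs (v - y) < d ->
     is_derive (fun t => g t v) u (dg u v) /\ Rabs (dg u v) <= M) ->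
  continuity_pt (fun t => g x t) y -> continuity_2d_pt g x y.
Proof.
  intros Hd Hdg Hcy eps.
  assert (HM : 0 <= M) by (destruct (Hdg x y) as [_ H]; rewrite ?Rminus_eq_0, ?Rabs_R0; auto;
                            pose proof (Rabs_pos (dg x y)); lra).
  destruct (Hcy (eps / 2)) as [d1 [Hd1 Hcy']]; [pose proof (cond_pos eps); lra|].
  set (k := eps / (2 * (M + 1))).
  assert (Hk : 0 < k) by (apply Rdiv_lt_0_compat; [apply cond_pos | lra]).
  assert (HMk : M * k < eps / 2).
  { unfold k; apply Rmult_lt_reg_r with (2 * (M + 1)); [lra|].
    field_simplify; [pose proof (cond_pos eps); nra | lra]. }
  exists (mkposreal _ (Rmin_pos _ _ Hd (Rmin_pos _ _ Hd1 Hk))); intros u v Hu Hv; simpl in Hu, Hv.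
  pose proof (Rmin_l d (Rmin d1 k)); pose proof (Rmin_r d (Rmin d1 k)).
  pose proof (Rmin_l d1 k); pose proof (Rmin_r d1 k).
  assert (Hnear : forall c, Rmin x u <= c <= Rmax x u -> Rabs (c - x) < d)
    by (intros c Hc; pose proof (Rabs_between_le x u c Hc); lra).
  destruct (MVT_gen (fun t => g t v) x u (fun t => dg t v)) as [c [Hc Hmvt]].
  - intros t Ht; apply (Hdg t v); [apply Hnear; lra | lra].
  - intros t Ht; apply (continuity_pt_of_is_derive _ _ (dg t v)), (Hdg t v); [apply Hnear |]; lra.
  - assert (Hx : Rabs (g u v - g x v) <= M * Rabs (u - x)).
    { rewrite Hmvt, Rabs_mult; apply Rmult_le_compat_r; [apply Rabs_pos|apply (Hdg c v); auto; lra]. }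
    assert (Hy : Rabs (g x v - g x y) < eps / 2).
    { destruct (Req_dec v y) as [->|Hvy].
      - rewrite Rminus_eq_0, Rabs_R0; pose proof (cond_pos eps); lra.
      - apply (Hcy' v); split; [split; [exact I | auto] | change (Rabs (v - y) < d1); lra]. }
    replace (g u v - g x y) with ((g u v - g x v) + (g x v - g x y)) by ring.
    eapply Rle_lt_trans; [apply Rabs_triang|].
    assert (M * Rabs (u - x) <= M * k) by (apply Rmult_le_compat_l; lra); lra.
Qed.

Lemma locally_Rabs_lt y r : Rabs y < r -> locally y (fun t => Rabs t < r).
Proof.
  intros H; assert (Hp : 0 < r - Rabs y) by lra.
  exists (mkposreal _ Hp); intros t Ht; change (Rabs (t - y) < r - Rabs y) in Ht.
  pose proof (Rabs_triang_inv t y); lra.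
Qed.

Lemma locally_2d_Rabs_lt x y r : Rabs x < r -> Rabs y < r ->
  locally_2d (fun u v => Rabs u < r /\ Rabs v < r) x y.
Proof.
  intros Hx Hy; assert (Hd : 0 < Rmin (r - Rabs x) (r - Rabs y)) by (apply Rmin_pos; lra).
  exists (mkposreal _ Hd); intros u v Hu Hv; simpl in *.
  pose proof (Rmin_l (r - Rabs x) (r - Rabs y)); pose proof (Rmin_r (r - Rabs x) (r - Rabs y)).
  pose proof (Rabs_triang_inv u x); pose proof (Rabs_triang_inv v y); split; lra.
Qed.

Definition DPSeries (a : nat -> nat -> R) (x y : R) : R :=
  Series (fun n => Series (fun m => a n m * x ^ n * y ^ m)).

Definition DPS_abs_conv (a : nat -> nat -> R) (r : R) : Prop :=
  forall x y, Rabs x < r -> Rabs y < r ->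
    (forall n, ex_series (fun m => Rabs (a n m) * Rabs x ^ n * Rabs y ^ m)) /\
    ex_series (fun n => Series (fun m => Rabs (a n m) * Rabs x ^ n * Rabs y ^ m)).

Definition DPS_transpose (a : nat -> nat -> R) n m := a m n.
Definition DPS_derive_x (a : nat -> nat -> R) n m := INR (S n) * a (S n) m.
Definition DPS_derive_y (a : nat -> nat -> R) := DPS_transpose (DPS_derive_x (DPS_transpose a)).

Lemma DPSeries_ext a b x y : (forall n m, a n m = b n m) -> DPSeries a x y = DPSeries b x y.
Proof. intros H; unfold DPSeries; do 2 (apply Series_ext; intros); rewrite H; auto. Qed.

Lemma DPS_derive_xy_comm a : forall n m,
  DPS_derive_x (DPS_derive_y a) n m = DPS_derive_y (DPS_derive_x a) n m.
Proof. intros; unfold DPS_derive_y, DPS_derive_x, DPS_transpose; ring. Qed.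

Lemma Rabs_monomial c n m x y : Rabs (c * x ^ n * y ^ m) = Rabs c * Rabs x ^ n * Rabs y ^ m.
Proof. rewrite !Rabs_mult, !RPow_abs; reflexivity. Qed.

Lemma Rabs_INR_mult k u : Rabs (INR k * u) = INR k * Rabs u.
Proof. rewrite Rabs_mult, Rabs_right; auto using Rle_ge, pos_INR. Qed.

Section AbsConv.

Variables (a : nat -> nat -> R) (r : R).
Hypothesis a_conv : DPS_abs_conv a r.

Lemma DPS_abs_conv_terms x y : Rabs x < r -> Rabs y < r ->
  (forall n, ex_series (fun m => Rabs (a n m * x ^ n * y ^ m))) /\
  ex_series (fun n => Series (fun m => Rabs (a n m * x ^ n * y ^ m))).
Proof.
  intros Hx Hy; destruct (a_conv x y Hx Hy) as [H1 H2]; split.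
  - intros n; eapply ex_series_ext; [|apply (H1 n)]; intros; simpl; rewrite Rabs_monomial; auto.
  - eapply ex_series_ext; [|apply H2]; intros; apply Series_ext; intros; rewrite Rabs_monomial; auto.
Qed.

Lemma DPS_abs_conv_transpose : DPS_abs_conv (DPS_transpose a) r.
Proof.
  intros x y Hx Hy; destruct (DPS_abs_conv_terms y x Hy Hx) as [H1 H2]; split.
  - intros n; eapply ex_series_ext; [|apply (ex_series_col_abs _ H1 H2 n)].
    intros k; simpl; rewrite Rabs_monomial; unfold DPS_transpose; ring.
  - eapply ex_series_ext; [|apply (ex_series_swap_abs _ H1 H2)].
    intros; apply Series_ext; intros; rewrite Rabs_monomial; unfold DPS_transpose; ring.
Qed.

Lemma DPSeries_transpose x y : Rabs x < r -> Rabs y < r ->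
  DPSeries a x y = DPSeries (DPS_transpose a) y x.
Proof.
  intros Hx Hy; destruct (DPS_abs_conv_terms x y Hx Hy) as [H1 H2].
  unfold DPSeries; rewrite <- Series_swap by auto.
  do 2 (apply Series_ext; intros); unfold DPS_transpose; ring.
Qed.

Lemma ex_series_DPS_row_abs y n : Rabs y < r ->
  ex_series (fun m => Rabs (a n m) * Rabs y ^ m).
Proof.
  intros Hy; assert (Hr : 0 < r) by (pose proof (Rabs_pos y); lra).
  assert (Hr2 : Rabs (r / 2) < r) by (rewrite Rabs_right; lra).
  assert (Hpow : 0 < Rabs (r / 2) ^ n) by (apply pow_lt; rewrite Rabs_right; lra).
  destruct (a_conv (r / 2) y Hr2 Hy) as [H1 _].
  eapply ex_series_ext; [|apply (ex_series_scal_l (/ Rabs (r / 2) ^ n) _ (H1 n))].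
  intros m; simpl; change (scal _ ?u) with (/ Rabs (r / 2) ^ n * u); field; lra.
Qed.

Lemma CV_radius_DPS_row x y : Rabs x < r -> Rabs y < r ->
  Rbar_lt (Rabs x) (CV_radius (fun n => Series (fun m => a n m * y ^ m))).
Proof.
  intros Hx Hy; set (rho := (Rabs x + r) / 2).
  assert (Hrho : Rabs rho < r) by (unfold rho; rewrite Rabs_right; pose proof (Rabs_pos x); lra).
  destruct (DPS_abs_conv_terms rho y Hrho Hy) as [H1 H2].
  apply Rbar_lt_le_trans with (y := Finite rho); [simpl; unfold rho; lra|].
  apply (proj1 (CV_radius_bounded _)).
  exists (Series (fun n => Series (fun m => Rabs (a n m * rho ^ n * y ^ m)))); intros n.
  rewrite <- Series_scal_r.
  eapply Rle_trans; [apply Series_Rabs|].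
  - eapply ex_series_ext; [|apply (H1 n)]; intros; simpl; f_equal; ring.
  - rewrite (Series_ext _ (fun m => Rabs (a n m * rho ^ n * y ^ m)))
      by (intros; f_equal; ring).
    apply (term_le_Series (fun n => Series (fun m => Rabs (a n m * rho ^ n * y ^ m))));
      auto; intros; apply Series_ge0; auto using Rabs_pos.
Qed.

Lemma DPSeries_PSeries x y :
  DPSeries a x y = PSeries (fun n => Series (fun m => a n m * y ^ m)) x.
Proof.
  unfold DPSeries, PSeries; apply Series_ext; intros n.
  rewrite <- Series_scal_r; apply Series_ext; intros; ring.
Qed.

Lemma is_derive_DPSeries_x x y : Rabs x < r -> Rabs y < r ->
  is_derive (fun t => DPSeries a t y) x (DPSeries (DPS_derive_x a) x y).
Proof.
  intros Hx Hy.
  eapply is_derive_ext; [intros t; symmetry; apply DPSeries_PSeries|].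
  replace (DPSeries (DPS_derive_x a) x y) with
    (PSeries (PS_derive (fun n => Series (fun m => a n m * y ^ m))) x).
  - apply is_derive_PSeries, CV_radius_DPS_row; auto.
  - unfold DPSeries, PSeries, PS_derive, DPS_derive_x; apply Series_ext; intros n.
    rewrite <- Series_scal_l, <- Series_scal_r; apply Series_ext; intros; ring.
Qed.

End AbsConv.

Lemma DPS_abs_conv_abs a r : DPS_abs_conv a r -> DPS_abs_conv (fun n m => Rabs (a n m)) r.
Proof.
  intros H x y Hx Hy; destruct (H x y Hx Hy) as [H1 H2].
  split.
  - intros n; eapply ex_series_ext; [|apply (H1 n)]; intros; simpl; rewrite Rabs_Rabsolu; auto.
  - eapply ex_series_ext; [|apply H2]; intros; apply Series_ext; intros; rewrite Rabs_Rabsolu; auto.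
Qed.

Lemma DPS_abs_conv_derive_x a r : DPS_abs_conv a r -> DPS_abs_conv (DPS_derive_x a) r.
Proof.
  (* Summing rows first, this is the absolute convergence at [|x|] of the derived power
     series of the row sums [c] of [|a|], whose radius is that of [c]. *)
  intros H x y Hx Hy.
  set (c n := Series (fun m => Rabs (a n m) * Rabs y ^ m)).
  assert (Hrow : forall n, Series (fun m => Rabs (DPS_derive_x a n m) * Rabs x ^ n * Rabs y ^ m)
                            = INR (S n) * c (S n) * Rabs x ^ n).
  { intros n; unfold c; rewrite <- Series_scal_l, <- Series_scal_r; apply Series_ext; intros m.
    unfold DPS_derive_x; rewrite Rabs_INR_mult; ring. }
  split.
  - intros n; eapply ex_series_ext;
      [|apply (ex_series_scal_l (INR (S n) * Rabs x ^ n) _ (ex_series_DPS_row_abs a r H y (S n) Hy))].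
    intros m; change (scal ?k ?u) with (k * u); unfold DPS_derive_x.
    rewrite Rabs_INR_mult; simpl; ring.
  - assert (Hcv : Rbar_lt (Rabs (Rabs x)) (CV_radius (PS_derive c))).
    { rewrite CV_radius_derive, Rabs_Rabsolu.
      apply (CV_radius_DPS_row _ r (DPS_abs_conv_abs a r H)); rewrite ?Rabs_Rabsolu; auto. }
    eapply ex_series_ext; [|apply (CV_disk_inside _ _ Hcv)].
    intros n; rewrite Hrow; unfold PS_derive.
    rewrite Rabs_right; [auto|].
    apply Rle_ge, Rmult_le_pos; [apply Rmult_le_pos; [apply pos_INR|]|apply pow_le, Rabs_pos].
    apply Series_ge0; [intros; apply Rmult_le_pos; [apply Rabs_pos|apply pow_le, Rabs_pos]|].
    apply (ex_series_DPS_row_abs a r H y); auto.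
Qed.

Lemma DPS_abs_conv_derive_y a r : DPS_abs_conv a r -> DPS_abs_conv (DPS_derive_y a) r.
Proof. intros H; apply DPS_abs_conv_transpose, DPS_abs_conv_derive_x, DPS_abs_conv_transpose, H. Qed.

Section Regularity.

Variables (a : nat -> nat -> R) (r : R).
Hypothesis a_conv : DPS_abs_conv a r.

Lemma is_derive_DPSeries_y x y : Rabs x < r -> Rabs y < r ->
  is_derive (fun t => DPSeries a x t) y (DPSeries (DPS_derive_y a) x y).
Proof.
  intros Hx Hy.
  pose proof (DPS_abs_conv_transpose a r a_conv) as Ht.
  rewrite (DPSeries_transpose _ r) by (auto using DPS_abs_conv_derive_y).
  eapply is_derive_ext_loc; [|apply (is_derive_DPSeries_x _ r Ht y x Hy Hx)].
  apply (filter_imp _ _ (fun t Ht' => eq_sym (DPSeries_transpose a r a_conv x t Hx Ht'))).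
  apply locally_Rabs_lt, Hy.
Qed.

Lemma Rabs_DPSeries_le rho t s : 0 <= rho < r -> Rabs t <= rho -> Rabs s <= rho ->
  Rabs (DPSeries a t s) <= DPSeries (fun n m => Rabs (a n m)) rho rho.
Proof.
  intros Hrho Ht Hs.
  assert (Hr : Rabs rho < r) by (rewrite Rabs_right; lra).
  destruct (DPS_abs_conv_terms a r a_conv t s ltac:(lra) ltac:(lra)) as [A1 A2].
  destruct (a_conv rho rho Hr Hr) as [B1 B2].
  assert (Hterm : forall n m, Rabs (a n m * t ^ n * s ^ m) <= Rabs (a n m) * rho ^ n * rho ^ m).
  { intros n m; rewrite Rabs_monomial.
    apply Rmult_le_compat; try apply Rmult_le_compat_l; auto using pow_le, Rabs_pos, pow_incr;
      try apply Rmult_le_pos; auto using pow_le, Rabs_pos. }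
  rewrite Rabs_right in B1, B2 by lra.
  unfold DPSeries; eapply Rle_trans; [apply Series_Rabs|].
  { eapply ex_series_Rabs_le; [|apply A2]; intros n; rewrite Rabs_Rabsolu; apply Series_Rabs, A1. }
  apply Series_le; auto; intros n; split; [apply Rabs_pos|].
  eapply Rle_trans; [apply Series_Rabs, A1|].
  apply Series_le; auto; intros m; split; [apply Rabs_pos|apply Hterm].
Qed.

End Regularity.

Lemma continuity_2d_pt_DPSeries a r x y : DPS_abs_conv a r -> Rabs x < r -> Rabs y < r ->
  continuity_2d_pt (DPSeries a) x y.
Proof.
  intros a_conv Hx Hy; set (m := Rmax (Rabs x) (Rabs y)); set (rho := (m + r) / 2).
  assert (Hxm : Rabs x <= m) by apply Rmax_l.
  assert (Hym : Rabs y <= m) by apply Rmax_r.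
  assert (Hmr : m < r) by (apply Rmax_lub_lt; auto).
  assert (Hrho : 0 <= rho < r) by (unfold rho; pose proof (Rabs_pos x); lra).
  apply (continuity_2d_pt_of_bounded_derive_x _ (DPSeries (DPS_derive_x a)) x y (rho - m)
           (DPSeries (fun n k => Rabs (DPS_derive_x a n k)) rho rho)); [unfold rho; lra | |].
  - intros u v Hu Hv.
    pose proof (Rabs_triang_inv u x); pose proof (Rabs_triang_inv v y).
    split; [apply (is_derive_DPSeries_x _ r); auto; lra|].
    apply (Rabs_DPSeries_le _ r); auto using DPS_abs_conv_derive_x; lra.
  - exact (continuity_pt_of_is_derive _ _ _ (is_derive_DPSeries_y a r a_conv x y Hx Hy)).
Qed.

Lemma differentiable_pt_lim_DPSeries a r x y : DPS_abs_conv a r -> Rabs x < r -> Rabs y < r ->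
  differentiable_pt_lim (DPSeries a) x y
    (DPSeries (DPS_derive_x a) x y) (DPSeries (DPS_derive_y a) x y).
Proof.
  intros a_conv Hx Hy; apply filterdiff_differentiable_pt_lim.
  apply (is_derive_filterdiff (DPSeries a) x y (DPSeries (DPS_derive_x a))).
  - apply (locally_2d_locally
             (fun u v => is_derive (fun z => DPSeries a z v) u (DPSeries (DPS_derive_x a) u v))).
    apply (locally_2d_impl (fun u v => Rabs u < r /\ Rabs v < r));
      [|apply (locally_2d_Rabs_lt x y r Hx Hy)].
    apply locally_2d_forall; intros u v [Hu Hv]; apply (is_derive_DPSeries_x _ r); auto.
  - apply (is_derive_DPSeries_y _ r); auto.
  - apply (continuity_2d_pt_filterlim (DPSeries (DPS_derive_x a))).
    apply (continuity_2d_pt_DPSeries _ r); auto using DPS_abs_conv_derive_x.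
Qed.

(** * A maximum principle on triangles *)

Definition clamp (lo hi t : R) := Rmax lo (Rmin hi t).

Lemma clamp_in lo hi t : lo <= hi -> lo <= clamp lo hi t <= hi.
Proof. intros; unfold clamp, Rmax, Rmin; repeat destruct Rle_dec; lra. Qed.

Lemma clamp_id lo hi t : lo <= t <= hi -> clamp lo hi t = t.
Proof. intros; unfold clamp, Rmax, Rmin; repeat destruct Rle_dec; lra. Qed.

Lemma clamp_lipschitz lo hi t t' : lo <= hi ->
  Rabs (clamp lo hi t - clamp lo hi t') <= Rabs (t - t').
Proof.
  intros; unfold clamp, Rmax, Rmin; repeat destruct Rle_dec;
    unfold Rabs; repeat destruct Rcase_abs; lra.
Qed.

Lemma clamp_sym_dist c c' x : 0 <= c' -> Rabs x <= c ->
  Rabs (clamp (- c') c' x - x) <= Rabs (c - c').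
Proof.
  unfold clamp, Rmax, Rmin; repeat destruct Rle_dec; unfold Rabs; repeat destruct Rcase_abs; lra.
Qed.

Lemma continuity_pt_of_2d_x (W : R -> R -> R) x y :
  continuity_2d_pt W x y -> continuity_pt (fun t => W t y) x.
Proof.
  intros H eps Heps; destruct (H (mkposreal _ Heps)) as [d Hd].
  exists d; split; [apply cond_pos|]; intros t [_ Ht]; apply Hd; [exact Ht|].
  rewrite Rminus_eq_0, Rabs_R0; apply cond_pos.
Qed.

Section TriangleMax.

Variables (W : R -> R -> R) (a : R).
Hypothesis a_pos : 0 < a.
Hypothesis W_cont : forall x y, Rabs x <= a -> 0 <= y <= a -> continuity_2d_pt W x y.

Lemma slice_argmax_exists : exists xm : R -> R, forall y, 0 <= y <= a ->
  Rabs (xm y) <= a - y /\ forall x, Rabs x <= a - y -> W x y <= W (xm y) y.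
Proof.
  set (P y xm := 0 <= y <= a -> Rabs xm <= a - y /\ forall x, Rabs x <= a - y -> W x y <= W xm y).
  exists (fun y => epsilon (inhabits 0) (P y)); intros y Hy.
  apply (epsilon_spec (inhabits 0) (P y)); auto.
  destruct (continuity_ab_maj (fun t => W t y) (- (a - y)) (a - y)) as [xm [Hmax Hxm]]; [lra| |].
  - intros c Hc; apply continuity_pt_of_2d_x, W_cont; [apply Rabs_le|]; lra.
  - exists xm; intros _; split; [apply Rabs_le; lra|].
    intros x Hx; apply Hmax, Rabs_le_between, Hx.
Qed.

Lemma slice_max_uniform (xm : R -> R) :
  (forall y, 0 <= y <= a -> Rabs (xm y) <= a - y /\
     forall x, Rabs x <= a - y -> W x y <= W (xm y) y) ->
  forall eps : posreal, exists d : posreal, forall y1 y2, 0 <= y1 <= a -> 0 <= y2 <= a ->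
    Rabs (y1 - y2) < d -> W (xm y1) y1 < W (xm y2) y2 + eps.
Proof.
  intros Hxm eps.
  destruct (uniform_continuity_2d W (- a) a 0 a) with (eps := eps) as [d Hd].
  { intros x y Hx Hy; apply W_cont; [apply Rabs_le|]; lra. }
  exists d; intros y1 y2 H1 H2 Hy.
  destruct (Hxm y1 H1) as [A1 _]; destruct (Hxm y2 H2) as [_ B2].
  set (x2 := clamp (- (a - y2)) (a - y2) (xm y1)).
  assert (Hx2 : - (a - y2) <= x2 <= a - y2) by (apply clamp_in; lra).
  assert (Hd2 : Rabs (x2 - xm y1) <= Rabs (y1 - y2)).
  { replace (y1 - y2) with (- ((a - y1) - (a - y2))) by ring; rewrite Rabs_Ropp.
    apply clamp_sym_dist; lra. }
  apply Rabs_le_between in A1.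
  specialize (Hd (xm y1) y1 x2 y2 ltac:(lra) ltac:(lra) ltac:(lra) ltac:(lra) ltac:(lra)
    ltac:(rewrite Rabs_minus_sym; lra)).
  specialize (B2 x2 (Rabs_le _ _ Hx2)); apply Rabs_def2 in Hd; lra.
Qed.

Lemma triangle_argmax : exists x0 y0, 0 <= y0 /\ Rabs x0 <= a - y0 /\
  forall x y, 0 <= y -> Rabs x <= a - y -> W x y <= W x0 y0.
Proof.
  (* Clamping the height makes the slice maximum continuous on all of [R], so the
     one-dimensional extreme value theorem applies to it. *)
  destruct slice_argmax_exists as [xm Hxm].
  set (cl := clamp 0 a).
  assert (Hcl : forall y, 0 <= cl y <= a) by (intros; apply clamp_in; lra).
  assert (HG : forall y, continuity_pt (fun t => W (xm (cl t)) (cl t)) y).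
  { intros y eps Heps.
    destruct (slice_max_uniform xm Hxm (mkposreal _ Heps)) as [d Hd].
    exists d; split; [apply cond_pos|]; intros y' [_ Hy'].
    assert (Hcc : Rabs (cl y' - cl y) < d)
      by (eapply Rle_lt_trans; [apply clamp_lipschitz; lra | exact Hy']).
    pose proof (Hd _ _ (Hcl y') (Hcl y) Hcc).
    rewrite Rabs_minus_sym in Hcc; pose proof (Hd _ _ (Hcl y) (Hcl y') Hcc).
    simpl; unfold R_dist; apply Rabs_def1; simpl in *; lra. }
  destruct (continuity_ab_maj (fun t => W (xm (cl t)) (cl t)) 0 a) as [ym [Hmax Hym]];
    [lra | intros; apply HG|].
  assert (Hid : forall y, 0 <= y <= a -> cl y = y) by (intros; apply clamp_id; auto).
  exists (xm ym), ym; destruct (Hxm ym Hym) as [Hslice _].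
  split; [lra | split; [exact Hslice|]].
  intros x y Hy Hx; pose proof (Rabs_pos x).
  specialize (Hmax y ltac:(lra)); rewrite !Hid in Hmax by lra.
  destruct (Hxm y ltac:(lra)) as [_ Hsup]; specialize (Hsup x Hx); lra.
Qed.

End TriangleMax.

Lemma is_derive_pos_increasing (g : R -> R) D : is_derive g 0 D -> 0 < D ->
  exists d, 0 < d /\ forall t, 0 < t < d -> g 0 < g t.
Proof.
  intros Hg HD; destruct (proj1 (is_derive_Reals g 0 D) Hg (D / 2)) as [[d Hd] Hlim]; [lra|].
  exists d; split; [exact Hd|]; intros t Ht.
  specialize (Hlim t ltac:(lra) ltac:(simpl; rewrite Rabs_right; lra)).
  rewrite Rplus_0_l in Hlim; apply Rabs_def2 in Hlim.
  assert (Hq : 0 < (g t - g 0) / t) by lra.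
  replace (g t) with (g 0 + (g t - g 0) / t * t) by (field; lra); nra.
Qed.

Lemma triangle_max_principle (W : R -> R -> R) a : 0 < a ->
  (forall x y, Rabs x <= a -> 0 <= y <= a -> continuity_2d_pt W x y) ->
  (forall x, Rabs x <= a -> W x 0 <= 0) ->
  (forall x y, 0 < y -> Rabs x <= a - y -> 0 < W x y ->
     exists v1 v2 D, Rabs v1 <= v2 /\ 0 < v2 /\ 0 < D /\
       is_derive (fun t => W (x - t * v1) (y - t * v2)) 0 D) ->
  forall x y, 0 <= y -> Rabs x <= a - y -> W x y <= 0.
Proof.
  intros Ha Hc H0 Hdir x y Hy Hx.
  destruct (triangle_argmax W a Ha Hc) as [x0 [y0 [Hy0 [Hx0 Hmax]]]].
  eapply Rle_trans; [apply Hmax; auto|].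
  destruct (Rle_dec (W x0 y0) 0) as [|Hpos]; [auto|exfalso; apply Rnot_le_lt in Hpos].
  destruct (Req_dec y0 0) as [->|Hy00]; [pose proof (H0 x0 ltac:(lra)); lra|].
  destruct (Hdir x0 y0 ltac:(lra) Hx0 Hpos) as [v1 [v2 [D [Hv [Hv2 [HD Hder]]]]]].
  destruct (is_derive_pos_increasing _ D Hder HD) as [d [Hd Hinc]].
  (* Move backwards along the direction, but not below the base [y = 0]. *)
  assert (Ht : exists t, 0 < t < d /\ t * v2 <= y0).
  { exists (Rmin (d / 2) (y0 / v2)).
    pose proof (Rmin_l (d / 2) (y0 / v2)); pose proof (Rmin_r (d / 2) (y0 / v2)).
    assert (0 < Rmin (d / 2) (y0 / v2)) by (apply Rmin_pos; [lra | apply Rdiv_lt_0_compat; lra]).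
    split; [lra|].
    replace y0 with (y0 / v2 * v2) at 2 by (field; lra); apply Rmult_le_compat_r; lra. }
  destruct Ht as [t Ht].
  specialize (Hinc t ltac:(lra)); rewrite !Rmult_0_l, !Rminus_0_r in Hinc.
  assert (Hle : W (x0 - t * v1) (y0 - t * v2) <= W x0 y0).
  { apply Hmax; [lra|].
    eapply Rle_trans; [apply Rabs_triang|].
    rewrite Rabs_Ropp, Rabs_mult, (Rabs_right t) by lra.
    assert (t * Rabs v1 <= t * v2) by (apply Rmult_le_compat_l; lra); lra. }
  lra.
Qed.

(** * Uniqueness for a transport equation *)

Lemma is_derive_backward (B : R -> R -> R) x y v1 v2 l :
  is_derive (fun t => B (x + t * v1) (y + t * v2)) 0 l ->
  is_derive (fun t => B (x - t * v1) (y - t * v2)) 0 (- l).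
Proof.
  intros H.
  assert (Hopp : is_derive (fun t : R => - t) 0 (-1)) by (auto_derive; auto; ring).
  assert (Hc : is_derive (fun t => B (x + - t * v1) (y + - t * v2)) 0 (scal (-1) l))
    by (apply (is_derive_comp (fun t => B (x + t * v1) (y + t * v2))); [rewrite Ropp_0|]; auto).
  replace (- l) with (scal (-1) l) by (change (-1 * l = - l); ring).
  eapply is_derive_ext; [|exact Hc]; intros t; simpl; f_equal; ring.
Qed.

Lemma is_derive_exp_sq (g : R -> R) K y v dg : is_derive g 0 dg ->
  is_derive (fun t => exp (- K * (y - t * v)) * g t ^ 2) 0
    (exp (- K * y) * (K * v * g 0 ^ 2 + 2 * g 0 * dg)).
Proof.
  intros Hg; auto_derive; [exists dg; exact Hg|].
  replace (Derive (fun x : R => g x) 0) with dg by (symmetry; apply is_derive_unique, Hg).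
  replace (y + - (0 * v)) with y by ring; ring.
Qed.

Section Transport.

Variables (B V1 V2 c : R -> R -> R) (a m C : R).
Hypothesis a_pos : 0 < a.
Hypothesis m_pos : 0 < m.
Hypothesis B_cont : forall x y, Rabs x <= a -> Rabs y <= a -> continuity_2d_pt B x y.
Hypothesis V_cone : forall x y, Rabs x <= a -> Rabs y <= a ->
  Rabs (V1 x y) <= V2 x y /\ m <= V2 x y.
Hypothesis c_bound : forall x y, Rabs x <= a -> Rabs y <= a -> Rabs (c x y) <= C.
Hypothesis B_transport : forall x y, Rabs x <= a -> Rabs y <= a ->
  is_derive (fun t => B (x + t * V1 x y) (y + t * V2 x y)) 0 (c x y * B x y).
Hypothesis B_init : forall x, Rabs x <= a -> B x 0 = 0.

Lemma transport_zero_upper x y : 0 <= y -> Rabs x <= a - y -> B x y = 0.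
Proof.
  (* The weighted energy [W] strictly increases backwards along [V] wherever [B <> 0],
     because [K * V2 > 2 * c]; the maximum principle on the triangle then forces [W <= 0]. *)
  set (K := (2 * C + 1) / m).
  set (W := fun x y => exp (- K * y) * B x y ^ 2).
  assert (HW : forall x y, 0 <= y -> Rabs x <= a - y -> W x y <= 0).
  { apply triangle_max_principle; [exact a_pos | | |].
    - intros u v Hu Hv; apply continuity_2d_pt_mult.
      + apply continuity_1d_2d_pt_comp; [apply derivable_continuous_pt, derivable_pt_exp|].
        apply continuity_2d_pt_mult; [apply continuity_2d_pt_const | apply continuity_2d_pt_id2].
      + apply continuity_2d_pt_mult; [|apply continuity_2d_pt_mult; [|apply continuity_2d_pt_const]];
          apply B_cont; auto; apply Rabs_le; lra.
    - intros u Hu; unfold W; rewrite B_init by auto; right; ring.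
    - intros u v Hv Hu HWpos.
      pose proof (Rabs_pos u).
      assert (Hu' : Rabs u <= a) by lra.
      assert (Hv' : Rabs v <= a) by (rewrite Rabs_right; lra).
      destruct (V_cone u v Hu' Hv') as [Hcone HV2].
      pose proof (c_bound u v Hu' Hv') as Hc.
      assert (HB : B u v <> 0)
        by (intros HB; unfold W in HWpos; rewrite HB in HWpos; simpl in HWpos; lra).
      exists (V1 u v), (V2 u v), (exp (- K * v) * B u v ^ 2 * (K * V2 u v - 2 * c u v)).
      split; [auto | split; [lra | split]].
      + apply Rmult_lt_0_compat; [apply Rmult_lt_0_compat; [apply exp_pos | apply pow2_gt_0, HB]|].
        assert (K * m = 2 * C + 1) by (unfold K; field; lra).
        assert (K * m <= K * V2 u v).
        { apply Rmult_le_compat_l; [|lra].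
          unfold K; apply Rdiv_le_0_compat; pose proof (Rabs_pos (c u v)); lra. }
        pose proof (Rle_abs (c u v)); lra.
      + replace (exp (- K * v) * B u v ^ 2 * (K * V2 u v - 2 * c u v)) with
          (exp (- K * v) * (K * V2 u v * B (u - 0 * V1 u v) (v - 0 * V2 u v) ^ 2 +
             2 * B (u - 0 * V1 u v) (v - 0 * V2 u v) * - (c u v * B u v)))
          by (rewrite !Rmult_0_l, !Rminus_0_r; ring).
        apply (is_derive_exp_sq (fun t => B (u - t * V1 u v) (v - t * V2 u v))).
        apply is_derive_backward, B_transport; auto. }
  intros Hy Hx; specialize (HW x y Hy Hx); unfold W in HW.
  assert (Hsq : B x y * B x y <= 0).
  { apply Rmult_le_reg_l with (exp (- K * y)); [apply exp_pos|].
    rewrite Rmult_0_r; simpl in HW; rewrite Rmult_1_r in HW; exact HW. }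
  nra.
Qed.

End Transport.

Lemma transport_zero (B V1 V2 c : R -> R -> R) (a m C : R) :
  0 < a -> 0 < m ->
  (forall x y, Rabs x <= a -> Rabs y <= a ->
     continuity_2d_pt B x y /\ Rabs (V1 x y) <= V2 x y /\ m <= V2 x y /\ Rabs (c x y) <= C /\
     is_derive (fun t => B (x + t * V1 x y) (y + t * V2 x y)) 0 (c x y * B x y)) ->
  (forall x, Rabs x <= a -> B x 0 = 0) ->
  forall x y, Rabs x + Rabs y <= a -> B x y = 0.
Proof.
  intros Ha Hm H Hinit x y Hxy.
  destruct (Rle_lt_dec 0 y) as [Hy|Hy].
  - rewrite (Rabs_right y) in Hxy by lra.
    apply (transport_zero_upper B V1 V2 c a m C); auto; try lra;
      intros u v Hu Hv; destruct (H u v Hu Hv) as (? & ? & ? & ? & ?); auto.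
  - (* Reflect [y -> -y]; the field becomes [(-V1, V2)] and the rate [-c]. *)
    rewrite (Rabs_left y) in Hxy by lra; replace y with (- (- y)) by ring.
    apply (transport_zero_upper (fun u v => B u (- v)) (fun u v => - V1 u (- v))
             (fun u v => V2 u (- v)) (fun u v => - c u (- v)) a m C); auto; try lra;
      [intros u v Hu Hv; rewrite <- Rabs_Ropp in Hv;
         destruct (H u (- v) Hu Hv) as (Hc & Hcone & HV2 & Hcb & Hd)..
      |intros u Hu; rewrite Ropp_0; auto].
    + intros eps; destruct (Hc eps) as [d Hd'].
      exists d; intros u' v' Hu' Hv'; apply Hd'; [auto|].
      replace (- v' - - v) with (- (v' - v)) by ring; rewrite Rabs_Ropp; auto.
    + rewrite Rabs_Ropp; auto.
    + rewrite Rabs_Ropp; auto.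
    + replace (- c u (- v) * B u (- v)) with (- (c u (- v) * B u (- v))) by ring.
      eapply is_derive_ext; [|apply is_derive_backward, Hd].
      intros t; simpl; f_equal; ring.
Qed.

(** * The equations A_F = 0 and B_F = 0 *)

Definition C2_on (f : R -> R -> R) (r : R) : Prop :=
  forall x y, Rabs x < r -> Rabs y < r ->
    differentiable_pt_lim (fx f) x y (fxx f x y) (fxy f x y) /\
    differentiable_pt_lim (fy f) x y (fxy f x y) (fyy f x y) /\
    continuity_2d_pt (fxx f) x y /\ continuity_2d_pt (fyy f) x y.

Section LocallyDPSeries.

Variables (g : R -> R -> R) (b : nat -> nat -> R) (r : R).
Hypothesis b_conv : DPS_abs_conv b r.
Hypothesis g_eq : forall u v, Rabs u < r -> Rabs v < r -> g u v = DPSeries b u v.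

Lemma locally_2d_eq_DPSeries x y : Rabs x < r -> Rabs y < r ->
  locally_2d (fun u v => DPSeries b u v = g u v) x y.
Proof.
  intros Hx Hy; apply (locally_2d_impl (fun u v => Rabs u < r /\ Rabs v < r));
    [apply locally_2d_forall; intros u v [Hu Hv]; symmetry; auto | apply locally_2d_Rabs_lt; auto].
Qed.

Lemma Derive_x_DPSeries x y : Rabs x < r -> Rabs y < r ->
  Derive (fun t => g t y) x = DPSeries (DPS_derive_x b) x y.
Proof.
  intros Hx Hy; rewrite (Derive_ext_loc _ (fun t => DPSeries b t y)).
  - apply is_derive_unique, (is_derive_DPSeries_x b r); auto.
  - apply (filter_imp (fun t => Rabs t < r)); [intros t Ht; apply g_eq; auto | apply locally_Rabs_lt, Hx].
Qed.

Lemma Derive_y_DPSeries x y : Rabs x < r -> Rabs y < r ->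
  Derive (fun t => g x t) y = DPSeries (DPS_derive_y b) x y.
Proof.
  intros Hx Hy; rewrite (Derive_ext_loc _ (fun t => DPSeries b x t)).
  - apply is_derive_unique, (is_derive_DPSeries_y b r); auto.
  - apply (filter_imp (fun t => Rabs t < r)); [intros t Ht; apply g_eq; auto | apply locally_Rabs_lt, Hy].
Qed.

End LocallyDPSeries.

Lemma Series_pow0 (c : nat -> R) : Series (fun m => c m * 0 ^ m) = c 0%nat.
Proof.
  rewrite <- (PSeries_0 c); unfold PSeries; apply Series_ext; intros m.
  change (scal (0 ^ m) (c m)) with (0 ^ m * c m); ring.
Qed.

Section DPSeriesGerm.

Variables (f : R -> R -> R) (a : nat -> nat -> R) (r : R).
Hypothesis a_conv : DPS_abs_conv a r.
Hypothesis f_eq : forall x y, Rabs x < r -> Rabs y < r -> f x y = DPSeries a x y.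

Lemma C2_on_DPSeries : C2_on f r.
Proof.
  pose proof (DPS_abs_conv_derive_x a r a_conv) as Hax.
  pose proof (DPS_abs_conv_derive_y a r a_conv) as Hay.
  assert (Hfx : forall x y, Rabs x < r -> Rabs y < r -> fx f x y = DPSeries (DPS_derive_x a) x y)
    by (intros; apply (Derive_x_DPSeries f a r); auto).
  assert (Hfy : forall x y, Rabs x < r -> Rabs y < r -> fy f x y = DPSeries (DPS_derive_y a) x y)
    by (intros; apply (Derive_y_DPSeries f a r); auto).
  intros x y Hx Hy.
  assert (Hfxx : fxx f x y = DPSeries (DPS_derive_x (DPS_derive_x a)) x y)
    by (apply (Derive_x_DPSeries (fx f) (DPS_derive_x a) r); auto).
  assert (Hfxy : fxy f x y = DPSeries (DPS_derive_y (DPS_derive_x a)) x y)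
    by (apply (Derive_y_DPSeries (fx f) (DPS_derive_x a) r); auto).
  assert (Hfyy : fyy f x y = DPSeries (DPS_derive_y (DPS_derive_y a)) x y)
    by (apply (Derive_y_DPSeries (fy f) (DPS_derive_y a) r); auto).
  rewrite Hfxx, Hfxy, Hfyy; split; [|split; [|split]].
  - eapply differentiable_pt_lim_ext; [apply (locally_2d_eq_DPSeries (fx f) (DPS_derive_x a) r); auto|].
    apply (differentiable_pt_lim_DPSeries _ r); auto.
  - eapply differentiable_pt_lim_ext; [apply (locally_2d_eq_DPSeries (fy f) (DPS_derive_y a) r); auto|].
    rewrite <- (DPSeries_ext _ _ x y (DPS_derive_xy_comm a)).
    apply (differentiable_pt_lim_DPSeries _ r); auto.
  - apply (continuity_2d_pt_ext_loc (DPSeries (DPS_derive_x (DPS_derive_x a)))).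
    + apply (locally_2d_eq_DPSeries (fxx f) _ r); auto; intros.
      apply (Derive_x_DPSeries (fx f) (DPS_derive_x a) r); auto.
    + apply (continuity_2d_pt_DPSeries _ r); auto using DPS_abs_conv_derive_x.
  - apply (continuity_2d_pt_ext_loc (DPSeries (DPS_derive_y (DPS_derive_y a)))).
    + apply (locally_2d_eq_DPSeries (fyy f) _ r); auto; intros.
      apply (Derive_y_DPSeries (fy f) (DPS_derive_y a) r); auto.
    + apply (continuity_2d_pt_DPSeries _ r); auto using DPS_abs_conv_derive_y.
Qed.

Lemma analytic1_at0_DPSeries_trace : 0 < r -> analytic1_at0 (fun x => f x 0).
Proof.
  intros Hr; assert (H0r : Rabs 0 < r) by (rewrite Rabs_R0; exact Hr).
  exists r, (fun n => a n 0%nat); split; [exact Hr|]; intros x Hx; split.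
  - apply CV_radius_inside; erewrite CV_radius_ext; [apply (CV_radius_DPS_row a r a_conv x 0 Hx H0r)|].
    intros n; symmetry; apply Series_pow0.
  - rewrite f_eq, DPSeries_PSeries by auto; apply Series_ext; intros n; rewrite Series_pow0; auto.
Qed.

End DPSeriesGerm.

Lemma analytic2_at0_C2 f : analytic2_at0 f ->
  exists r, 0 < r /\ C2_on f r /\ analytic1_at0 (fun x => f x 0).
Proof.
  intros [r [a [Hr Hf]]].
  assert (Ha : DPS_abs_conv a r) by (intros x y Hx Hy; destruct (Hf x y Hx Hy) as (? & ? & _); auto).
  assert (Hfa : forall x y, Rabs x < r -> Rabs y < r -> f x y = DPSeries a x y)
    by (intros x y Hx Hy; apply (Hf x y Hx Hy)).
  exists r; split; [exact Hr|].
  split; [apply (C2_on_DPSeries f a r); auto | apply (analytic1_at0_DPSeries_trace f a r); auto].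
Qed.

Lemma A_F_decomposition f x y :
  A_F f x y = B_F f x y * (fxx f x y + fyy f x y)
    + fx f x y * (fx f x y * fxx f x y + fy f x y * fxy f x y)
    + fy f x y * (fx f x y * fxy f x y + fy f x y * fyy f x y).
Proof. unfold A_F, B_F; ring. Qed.

Lemma is_derive_along (g : R -> R -> R) x y gx gy v1 v2 :
  differentiable_pt_lim g x y gx gy ->
  is_derive (fun t => g (x + t * v1) (y + t * v2)) 0 (gx * v1 + gy * v2).
Proof.
  intros H; apply is_derive_Reals, (derivable_pt_lim_comp_2d g).
  - rewrite !Rmult_0_l, !Rplus_0_r; exact H.
  - apply is_derive_Reals; auto_derive; auto; ring.
  - apply is_derive_Reals; auto_derive; auto; ring.
Qed.

Lemma is_derive_one_minus_sq (p q : R -> R) dp dq : is_derive p 0 dp -> is_derive q 0 dq ->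
  is_derive (fun t => 1 - p t ^ 2 - q t ^ 2) 0 (-2 * (p 0 * dp + q 0 * dq)).
Proof.
  intros Hp Hq; auto_derive; [split; [exists dp; exact Hp | split; [exists dq; exact Hq | auto]]|].
  replace (Derive (fun x : R => p x) 0) with dp by (symmetry; apply is_derive_unique, Hp).
  replace (Derive (fun x : R => q x) 0) with dq by (symmetry; apply is_derive_unique, Hq).
  ring.
Qed.

Lemma is_derive_B_F_along f x y v1 v2 :
  differentiable_pt_lim (fx f) x y (fxx f x y) (fxy f x y) ->
  differentiable_pt_lim (fy f) x y (fxy f x y) (fyy f x y) ->
  is_derive (fun t => B_F f (x + t * v1) (y + t * v2)) 0
    (-2 * (fx f x y * (fxx f x y * v1 + fxy f x y * v2)
         + fy f x y * (fxy f x y * v1 + fyy f x y * v2))).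
Proof.
  intros HP HQ.
  pose proof (is_derive_along _ _ _ _ _ v1 v2 HP) as dP.
  pose proof (is_derive_along _ _ _ _ _ v1 v2 HQ) as dQ.
  pose proof (is_derive_one_minus_sq _ _ _ _ dP dQ) as dB.
  cbv beta in dB; rewrite !Rmult_0_l, !Rplus_0_r in dB; exact dB.
Qed.

Lemma continuity_2d_pt_B_F f x y :
  differentiable_pt_lim (fx f) x y (fxx f x y) (fxy f x y) ->
  differentiable_pt_lim (fy f) x y (fxy f x y) (fyy f x y) ->
  continuity_2d_pt (B_F f) x y.
Proof.
  intros HP HQ; unfold B_F.
  apply continuity_2d_pt_minus; [apply continuity_2d_pt_minus; [apply continuity_2d_pt_const|]|];
    simpl; repeat apply continuity_2d_pt_mult; try apply continuity_2d_pt_const;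
    apply differentiable_continuity_pt; do 2 eexists; eauto.
Qed.

Lemma is_derive_B_F_characteristic f x y :
  differentiable_pt_lim (fx f) x y (fxx f x y) (fxy f x y) ->
  differentiable_pt_lim (fy f) x y (fxy f x y) (fyy f x y) ->
  A_F f x y = 0 ->
  is_derive (fun t => B_F f (x + t * fx f x y) (y + t * fy f x y)) 0
    (2 * (fxx f x y + fyy f x y) * B_F f x y).
Proof.
  intros HP HQ HA.
  replace (2 * (fxx f x y + fyy f x y) * B_F f x y) with
    (-2 * (fx f x y * (fxx f x y * fx f x y + fxy f x y * fy f x y)
         + fy f x y * (fxy f x y * fx f x y + fyy f x y * fy f x y))).
  - apply is_derive_B_F_along; auto.
  - pose proof (A_F_decomposition f x y) as Hdec; rewrite HA in Hdec; lra.
Qed.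

Lemma locally_line_Rabs_lt x y v1 v2 e : Rabs x < e -> Rabs y < e ->
  locally 0 (fun t => Rabs (x + t * v1) < e /\ Rabs (y + t * v2) < e).
Proof.
  intros Hx Hy.
  set (k := Rabs v1 + Rabs v2 + 1).
  assert (Hk : 0 < k) by (unfold k; pose proof (Rabs_pos v1); pose proof (Rabs_pos v2); lra).
  assert (Hd : 0 < Rmin (e - Rabs x) (e - Rabs y) / k) by (apply Rdiv_lt_0_compat; [apply Rmin_pos|]; lra).
  exists (mkposreal _ Hd); intros t Ht; change (Rabs (t - 0) < Rmin (e - Rabs x) (e - Rabs y) / k) in Ht.
  rewrite Rminus_0_r in Ht.
  assert (Htk : Rabs t * k < Rmin (e - Rabs x) (e - Rabs y))
    by (apply Rmult_lt_reg_r with (/ k); [apply Rinv_0_lt_compat, Hk|]; rewrite Rmult_assoc, Rinv_r; lra).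
  pose proof (Rmin_l (e - Rabs x) (e - Rabs y)); pose proof (Rmin_r (e - Rabs x) (e - Rabs y)).
  pose proof (Rabs_pos t); pose proof (Rabs_pos v1); pose proof (Rabs_pos v2).
  split; eapply Rle_lt_trans; try apply Rabs_triang; rewrite Rabs_mult; unfold k in Htk; nra.
Qed.

Lemma is_derive_locally_zero (g : R -> R) l :
  locally 0 (fun t => g t = 0) -> is_derive g 0 l -> l = 0.
Proof.
  intros Hg Hd; rewrite <- (is_derive_unique _ _ _ Hd), (Derive_ext_loc _ (fun _ => 0)) by exact Hg.
  apply Derive_const.
Qed.

Lemma A_F_germ_zero_of_B_F f r : 0 < r -> C2_on f r -> germ2_zero (B_F f) -> germ2_zero (A_F f).
Proof.
  intros Hr HC2 [eps [Heps HB]].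
  exists (Rmin eps r); split; [apply Rmin_pos; auto|]; intros x y Hx Hy.
  pose proof (Rmin_l eps r); pose proof (Rmin_r eps r).
  destruct (HC2 x y ltac:(lra) ltac:(lra)) as (HP & HQ & _).
  assert (Hzero : forall v1 v2, locally 0 (fun t => B_F f (x + t * v1) (y + t * v2) = 0)).
  { intros v1 v2; apply (filter_imp (fun t => Rabs (x + t * v1) < eps /\ Rabs (y + t * v2) < eps)).
    - intros t [Hu Hv]; apply HB; auto.
    - apply locally_line_Rabs_lt; lra. }
  pose proof (is_derive_locally_zero _ _ (Hzero 1 0) (is_derive_B_F_along f x y 1 0 HP HQ)) as HBx.
  pose proof (is_derive_locally_zero _ _ (Hzero 0 1) (is_derive_B_F_along f x y 0 1 HP HQ)) as HBy.
  rewrite !Rmult_1_r, !Rmult_0_r, !Rplus_0_r in HBx; rewrite !Rmult_1_r, !Rmult_0_r, !Rplus_0_l in HBy.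
  apply Rmult_integral in HBx; apply Rmult_integral in HBy.
  rewrite A_F_decomposition, HB by lra.
  destruct HBx as [? | ->]; [lra|]; destruct HBy as [? | ->]; [lra | ring].
Qed.

Lemma continuity_2d_pt_near_origin (g : R -> R -> R) e : continuity_2d_pt g 0 0 -> 0 < e ->
  exists d, 0 < d /\ forall x y, Rabs x < d -> Rabs y < d -> Rabs (g x y - g 0 0) < e.
Proof.
  intros Hg He; destruct (Hg (mkposreal e He)) as [d Hd].
  exists d; split; [apply cond_pos|]; intros x y Hx Hy; apply Hd; rewrite Rminus_0_r; auto.
Qed.

Lemma C2_on_near_origin f r : 0 < r -> C2_on f r -> fx f 0 0 = 0 -> fy f 0 0 = 1 ->
  exists R1 C, 0 < R1 <= r /\ forall x y, Rabs x < R1 -> Rabs y < R1 ->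
    Rabs (fx f x y) < 1 / 2 /\ 1 / 2 < fy f x y /\ Rabs (fxx f x y + fyy f x y) <= C.
Proof.
  intros Hr HC2 HP0 HQ0.
  assert (H0r : Rabs 0 < r) by (rewrite Rabs_R0; exact Hr).
  destruct (HC2 0 0 H0r H0r) as (HP & HQ & Hxx & Hyy).
  destruct (continuity_2d_pt_near_origin (fx f) (1 / 2)) as [d1 [Hd1 H1]];
    [apply differentiable_continuity_pt; do 2 eexists; exact HP | lra |].
  destruct (continuity_2d_pt_near_origin (fy f) (1 / 2)) as [d2 [Hd2 H2]];
    [apply differentiable_continuity_pt; do 2 eexists; exact HQ | lra |].
  destruct (continuity_2d_pt_near_origin (fun x y => fxx f x y + fyy f x y) 1) as [d3 [Hd3 H3]];
    [apply continuity_2d_pt_plus; auto | lra |].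
  assert (HR1 : exists R1, 0 < R1 /\ R1 <= r /\ R1 <= d1 /\ R1 <= d2 /\ R1 <= d3).
  { exists (Rmin r (Rmin d1 (Rmin d2 d3))).
    pose proof (Rmin_l r (Rmin d1 (Rmin d2 d3))); pose proof (Rmin_r r (Rmin d1 (Rmin d2 d3))).
    pose proof (Rmin_l d1 (Rmin d2 d3)); pose proof (Rmin_r d1 (Rmin d2 d3)).
    pose proof (Rmin_l d2 d3); pose proof (Rmin_r d2 d3).
    split; [repeat apply Rmin_pos; auto | lra]. }
  destruct HR1 as (R1 & HR1 & ? & ? & ? & ?).
  exists R1, (Rabs (fxx f 0 0 + fyy f 0 0) + 1); split; [lra|]; intros x y Hx Hy.
  specialize (H1 x y ltac:(lra) ltac:(lra)); specialize (H2 x y ltac:(lra) ltac:(lra));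
    specialize (H3 x y ltac:(lra) ltac:(lra)); simpl in H3.
  rewrite HP0, Rminus_0_r in H1; rewrite HQ0 in H2; apply Rabs_def2 in H2.
  pose proof (Rabs_triang_inv (fxx f x y + fyy f x y) (fxx f 0 0 + fyy f 0 0)).
  repeat split; lra.
Qed.

Lemma initial_data_of_B_F f r : 0 < r -> C2_on f r -> fx f 0 0 = 0 -> fy f 0 0 = 1 ->
  germ2_zero (B_F f) ->
  exists eps, 0 < eps /\ forall x, Rabs x < eps -> fy f x 0 = sqrt (1 - fx f x 0 ^ 2).
Proof.
  intros Hr HC2 HP0 HQ0 [eB [HeB HB]].
  destruct (C2_on_near_origin f r Hr HC2 HP0 HQ0) as (R1 & C & HR1 & Hnear).
  exists (Rmin eB R1); split; [apply Rmin_pos; lra|]; intros x Hx.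
  pose proof (Rmin_l eB R1); pose proof (Rmin_r eB R1).
  assert (Hr0 : Rabs 0 < Rmin eB R1) by (rewrite Rabs_R0; apply Rmin_pos; lra).
  destruct (Hnear x 0 ltac:(lra) ltac:(lra)) as (_ & Hpos & _).
  specialize (HB x 0 ltac:(lra) ltac:(lra)); unfold B_F in HB.
  replace (1 - fx f x 0 ^ 2) with (fy f x 0 ^ 2) by lra.
  rewrite sqrt_pow2; lra.
Qed.

Lemma B_F_germ_zero_of_A_F f r : 0 < r -> C2_on f r -> fx f 0 0 = 0 -> fy f 0 0 = 1 ->
  germ2_zero (A_F f) ->
  (exists eps, 0 < eps /\ forall x, Rabs x < eps -> fy f x 0 = sqrt (1 - fx f x 0 ^ 2)) ->
  germ2_zero (B_F f).
Proof.
  intros Hr HC2 HP0 HQ0 [eA [HeA HA]] [eps [Heps Hinit]].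
  destruct (C2_on_near_origin f r Hr HC2 HP0 HQ0) as (R1 & C & HR1 & Hnear).
  set (a := Rmin eps (Rmin eA R1) / 2).
  assert (Ha : 0 < a /\ a < eps /\ a < eA /\ a < R1).
  { pose proof (Rmin_l eps (Rmin eA R1)); pose proof (Rmin_r eps (Rmin eA R1)).
    pose proof (Rmin_l eA R1); pose proof (Rmin_r eA R1).
    assert (0 < Rmin eps (Rmin eA R1)) by (repeat apply Rmin_pos; lra).
    unfold a; lra. }
  exists (a / 2); split; [lra|]; intros x y Hx Hy.
  apply (transport_zero (B_F f) (fx f) (fy f) (fun u v => 2 * (fxx f u v + fyy f u v))
           a (1 / 2) (2 * C)); [lra | lra | | | lra].
  - intros u v Hu Hv.
    destruct (HC2 u v ltac:(lra) ltac:(lra)) as (HP & HQ & _).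
    destruct (Hnear u v ltac:(lra) ltac:(lra)) as (HPb & HQb & HC).
    split; [|split; [|split; [|split]]].
    + apply continuity_2d_pt_B_F; auto.
    + lra.
    + lra.
    + rewrite Rabs_mult, Rabs_right by lra; lra.
    + apply is_derive_B_F_characteristic; auto; apply HA; lra.
  - intros u Hu.
    assert (HPb : Rabs (fx f u 0) < 1 / 2) by (apply Hnear; rewrite ?Rabs_R0; lra).
    unfold B_F; rewrite Hinit by lra; rewrite pow2_sqrt; [ring|].
    apply Rabs_def2 in HPb; nra.
Qed.

Theorem corollary2p5 (f : R -> R -> R) :
  analytic2_at0 f -> f 0 0 = 0 -> fx f 0 0 = 0 -> fy f 0 0 = 1 ->
  (germ2_zero (B_F f) <->
   (germ2_zero (A_F f) /\
    exists psi : R -> R,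
      analytic1_at0 psi /\ psi 0 = 0 /\ Derive psi 0 = 0 /\
      exists eps, 0 < eps /\ forall x, Rabs x < eps ->
        f x 0 = psi x /\ fy f x 0 = sqrt (1 - (Derive psi x) ^ 2))).
Proof.
  intros Hf Hf0 HP0 HQ0.
  destruct (analytic2_at0_C2 f Hf) as (r & Hr & HC2 & Hpsi).
  split.
  - intros HB; split; [exact (A_F_germ_zero_of_B_F f r Hr HC2 HB)|].
    destruct (initial_data_of_B_F f r Hr HC2 HP0 HQ0 HB) as (eps & Heps & Hinit).
    exists (fun x => f x 0); repeat split; auto.
    exists eps; split; auto.
  - intros [HA (psi & _ & _ & _ & eps & Heps & Hpsi_eq)].
    apply (B_F_germ_zero_of_A_F f r Hr HC2 HP0 HQ0 HA).
    exists eps; split; [exact Heps|]; intros x Hx.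
    assert (Hfx : fx f x 0 = Derive psi x).
    { apply Derive_ext_loc, (filter_imp (fun t => Rabs t < eps)); [|apply locally_Rabs_lt, Hx].
      intros t Ht; apply Hpsi_eq, Ht. }
    rewrite Hfx; apply Hpsi_eq, Hx.
Qed.
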